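(* For every set of formulas $\Phi\cup\{\varphi\}$: $$\Phi\vdash_{L5}\varphi\iff \Phi\Vdash_{L5}\varphi\iff\Phi\Vdash^{Kr}_{L5}\varphi.$$
   Context: Formulas are built from a countable set $V$ of propositional variables using $\wedge,\vee,\rightarrow,\bot$ and the unary modal operator $\square$. Abbreviations: - $\neg\varphi:=\varphi\rightarrow\bot$; - $\top:=\neg\bot$; - $\varphi\leftrightarrow\psi:=(\varphi\rightarrow\psi)\wedge(\psi\rightarrow\varphi)$; - $\varphi\equiv\psi:=\square(\varphi\rightarrow\psi)\wedge\square(\psi\rightarrow\varphi)$. Deductive system $L5$. The axioms are all instances of the schemes: (i) all formulas having the form of a theorem of intuitionistic propositional logic (possibly containing $\square$); (ii) $\square\varphi\rightarrow\varphi$; (iii) $\square(\varphi\rightarrow\psi)\rightarrow(\square(\psi\rightarrow\chi)\rightarrow\square(\varphi\rightarrow\chi))$; (iv) $\square(\varphi\vee\psi)\rightarrow(\square\varphi\vee\square\psi)$; (v) $\square\varphi\rightarrow\square\square\varphi$; (vi) $\neg\square\varphi\rightarrow\square\neg\square\varphi$. In addition, all formulas $(\varphi\equiv\psi)\rightarrow(\chi[x:=\varphi]\equiv\chi[x:=\psi])$ (where $\chi[x:=\varphi]$ replaces every occurrence of variable $x$ in $\chi$ by $\varphi$) and all formulas $\varphi\vee\neg\varphi$ are added as theorems. The inference rules are: - Modus Ponens; - Axiom Necessitation: from an axiom of the form (i)–(vi) infer $\square$ of it. This rule applies only to axioms of the forms (i)–(vi). $\Phi\vdash_{L5}\varphi$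 means $\varphi$ is derivable from $\Phi$. $L5$-models: a structure $\mathcal{M}=(M,\mathit{TRUE},f_\bot,f_\top,f_\rightarrow,f_\vee,f_\wedge,f_\square)$ such that $(M,f_\bot,f_\top,f_\rightarrow,f_\vee,f_\wedge)$ is a Heyting algebra (order $\le$). Moreover, $\mathit{TRUE}\subseteq M$ is an ultrafilter, and for all $m,m',m''$: - $f_\square(m)\le m$; - $f_\square(f_\rightarrow(m,m'))\le f_\rightarrow(f_\square(f_\rightarrow(m',m'')),f_\square(f_\rightarrow(m,m'')))$; - $f_\square(f_\vee(m,m'))\le f_\vee(f_\square(m),f_\square(m'))$; - $f_\square(m)\in\mathit{TRUE}$ iff $m=f_\top$; - $f_\square(m)=f_\top$ if $m=f_\top$ and $f_\square(m)=f_\bot$ otherwise. Assignments $\gamma\colon V\to M$ extend homomorphically to all formulas ($\gamma(\bot)=f_\bot$, $\gamma(\square\varphi)=f_\square(\gamma(\varphi))$, $\gamma(\varphi*\psi)=f_*(\gamma(\varphi),\gamma(\psi))$). $(\mathcal{M},\gamma)\vDash\varphi$ iff $\gamma(\varphi)\in\mathit{TRUE}$. $\Phi\Vdash_{L5}\varphi$ means that for every $L5$-model $\mathcal{M}$ and assignment $\gamma$, if $(\mathcal{M},\gamma)$ satisfies all of $\Phi$ then it satisfies $\varphi$. $L5$-frames: a pair $(W,R)$ such that: - $W\neq\emptyset$; - $R$ is a partial order on $W$ with a smallest element $w_B$; - every $R$-chain has an upper bound in $W$. Assignments are $g\colon V\to\mathrm{Pow}(W)$ that are upward closed along $R$. Kripke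 satisfaction: - $\bot$ is never true; - $(w,g)\vDash x$ iff $w\in g(x)$; - $\vee,\wedge$ are pointwise; - $(w,g)\vDash\varphi\rightarrow\psi$ iff for all $w'$ with $wRw'$, $(w',g)\vDash\varphi$ implies $(w',g)\vDash\psi$; - $(w,g)\vDash\square\varphi$ iff $(w_B,g)\vDash\varphi$. $\Phi\Vdash^{Kr}_{L5}\varphi$ means: for every $L5$-frame $(W,R)$, every assignment $g$ and every $R$-maximal world $w_T\in W$, if $(w_T,g)\vDash\psi$ for all $\psi\in\Phi$ then $(w_T,g)\vDash\varphi$. *)

Inductive formula : Type :=
| Var : nat -> formula
| Bot : formula
| And : formula -> formula -> formula
| Or  : formula -> formula -> formula
| Imp : formula -> formula -> formula
| Box : formula -> formula.

Definition Neg (p : formula) : formula := Imp p Bot.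
Definition Top : formula := Neg Bot.
Definition Iff (p q : formula) : formula := And (Imp p q) (Imp q p).
Definition Equiv (p q : formula) : formula := And (Box (Imp p q)) (Box (Imp q p)).

Fixpoint subst (x : nat) (phi chi : formula) : formula :=
  match chi with
  | Var y => if Nat.eqb x y then phi else Var y
  | Bot => Bot
  | And a b => And (subst x phi a) (subst x phi b)
  | Or a b => Or (subst x phi a) (subst x phi b)
  | Imp a b => Imp (subst x phi a) (subst x phi b)
  | Box a => Box (subst x phi a)
  end.

(* Formulas having the form of a theorem of intuitionistic propositional
   logic (possibly containing □): theorems of a standard Hilbert calculus
   for IPC whose schemes are instantiated by arbitrary formulas of the full
   language (subformulas □ψ behave as atoms). *)
Inductive ipc_thm : formula -> Prop :=
| ipc_K  : forall a b, ipc_thm (Imp a (Imp b a))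
| ipc_S  : forall a b c,
    ipc_thm (Imp (Imp a (Imp b c)) (Imp (Imp a b) (Imp a c)))
| ipc_A1 : forall a b, ipc_thm (Imp (And a b) a)
| ipc_A2 : forall a b, ipc_thm (Imp (And a b) b)
| ipc_A3 : forall a b, ipc_thm (Imp a (Imp b (And a b)))
| ipc_O1 : forall a b, ipc_thm (Imp a (Or a b))
| ipc_O2 : forall a b, ipc_thm (Imp b (Or a b))
| ipc_O3 : forall a b c,
    ipc_thm (Imp (Imp a c) (Imp (Imp b c) (Imp (Or a b) c)))
| ipc_EFQ : forall a, ipc_thm (Imp Bot a)
| ipc_MP : forall a b, ipc_thm a -> ipc_thm (Imp a b) -> ipc_thm b.

Inductive L5_axiom : formula -> Prop :=
| ax_i   : forall p, ipc_thm p -> L5_axiom p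
| ax_ii  : forall p, L5_axiom (Imp (Box p) p)
| ax_iii : forall p q r,
    L5_axiom (Imp (Box (Imp p q)) (Imp (Box (Imp q r)) (Box (Imp p r))))
| ax_iv  : forall p q, L5_axiom (Imp (Box (Or p q)) (Or (Box p) (Box q)))
| ax_v   : forall p, L5_axiom (Imp (Box p) (Box (Box p)))
| ax_vi  : forall p, L5_axiom (Imp (Neg (Box p)) (Box (Neg (Box p)))).

Inductive L5_deriv (Phi : formula -> Prop) : formula -> Prop :=
| d_hyp : forall p, Phi p -> L5_deriv Phi p
| d_ax  : forall p, L5_axiom p -> L5_deriv Phi p
| d_substthm : forall x p q chi,
    L5_deriv Phi (Imp (Equiv p q) (Equiv (subst x p chi) (subst x q chi)))
| d_lem : forall p, L5_deriv Phi (Or p (Neg p))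
| d_nec : forall p, L5_axiom p -> L5_deriv Phi (Box p)
| d_mp  : forall p q, L5_deriv Phi p -> L5_deriv Phi (Imp p q) -> L5_deriv Phi q.

Section Algebra.
Variable M : Type.
Variables (bot top : M) (imp join meet : M -> M -> M).

Definition hle (a b : M) : Prop := meet a b = a.

Definition is_heyting : Prop :=
  (forall a b, meet a b = meet b a) /\
  (forall a b c, meet a (meet b c) = meet (meet a b) c) /\
  (forall a b, join a b = join b a) /\
  (forall a b c, join a (join b c) = join (join a b) c) /\
  (forall a b, meet a (join a b) = a) /\
  (forall a b, join a (meet a b) = a) /\
  (forall a, hle bot a) /\
  (forall a, hle a top) /\
  (forall a b c, hle (meet c a) b <-> hle c (imp a b)).

Definition is_filter (F : M -> Prop) : Prop :=
  F top /\
  (forall a b, F a -> hle a b -> F b) /\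
  (forall a b, F a -> F b -> F (meet a b)).

Definition is_proper_filter (F : M -> Prop) : Prop := is_filter F /\ ~ F bot.

Definition is_ultrafilter (F : M -> Prop) : Prop :=
  is_proper_filter F /\
  (forall G, is_proper_filter G -> (forall x, F x -> G x) -> forall x, G x -> F x).
End Algebra.

Definition is_L5_model (M : Type) (TRUE : M -> Prop) (fbot ftop : M)
  (fimp fjoin fmeet : M -> M -> M) (fbox : M -> M) : Prop :=
  is_heyting M fbot ftop fimp fjoin fmeet /\
  is_ultrafilter M fbot ftop fmeet TRUE /\
  (forall m, hle M fmeet (fbox m) m) /\
  (forall m m' m'', hle M fmeet (fbox (fimp m m'))
       (fimp (fbox (fimp m' m'')) (fbox (fimp m m'')))) /\
  (forall m m', hle M fmeet (fbox (fjoin m m')) (fjoin (fbox m) (fbox m'))) /\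
  (forall m, TRUE (fbox m) <-> m = ftop) /\
  (forall m, (m = ftop -> fbox m = ftop) /\ (m <> ftop -> fbox m = fbot)).

Fixpoint eval (M : Type) (fbot : M) (fimp fjoin fmeet : M -> M -> M)
  (fbox : M -> M) (gamma : nat -> M) (p : formula) : M :=
  match p with
  | Var x => gamma x
  | Bot => fbot
  | And a b => fmeet (eval M fbot fimp fjoin fmeet fbox gamma a)
                     (eval M fbot fimp fjoin fmeet fbox gamma b)
  | Or a b => fjoin (eval M fbot fimp fjoin fmeet fbox gamma a)
                    (eval M fbot fimp fjoin fmeet fbox gamma b)
  | Imp a b => fimp (eval M fbot fimp fjoin fmeet fbox gamma a)
                    (eval M fbot fimp fjoin fmeet fbox gamma b)
  | Box a => fbox (eval M fbot fimp fjoin fmeet fbox gamma a)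
  end.

Definition L5_conseq (Phi : formula -> Prop) (phi : formula) : Prop :=
  forall (M : Type) (TRUE : M -> Prop) (fbot ftop : M)
         (fimp fjoin fmeet : M -> M -> M) (fbox : M -> M),
    is_L5_model M TRUE fbot ftop fimp fjoin fmeet fbox ->
    forall gamma : nat -> M,
      (forall psi, Phi psi -> TRUE (eval M fbot fimp fjoin fmeet fbox gamma psi)) ->
      TRUE (eval M fbot fimp fjoin fmeet fbox gamma phi).

(* (W, R) is an L5-frame with smallest element wB (wB is unique by
   antisymmetry, so it is passed explicitly). *)
Definition is_L5_frame (W : Type) (R : W -> W -> Prop) (wB : W) : Prop :=
  (exists w : W, True) /\
  (forall w, R w w) /\
  (forall u v, R u v -> R v u -> u = v) /\
  (forall u v w, R u v -> R v w -> R u w) /\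
  (forall w, R wB w) /\
  (forall C : W -> Prop,
      (forall x y, C x -> C y -> R x y \/ R y x) ->
      exists u, forall x, C x -> R x u).

Fixpoint forces (W : Type) (R : W -> W -> Prop) (wB : W) (g : nat -> W -> Prop)
  (w : W) (p : formula) : Prop :=
  match p with
  | Var x => g x w
  | Bot => False
  | And a b => forces W R wB g w a /\ forces W R wB g w b
  | Or a b => forces W R wB g w a \/ forces W R wB g w b
  | Imp a b => forall w', R w w' -> forces W R wB g w' a -> forces W R wB g w' b
  | Box a => forces W R wB g wB a
  end.

Definition Kr_conseq (Phi : formula -> Prop) (phi : formula) : Prop :=
  forall (W : Type) (R : W -> W -> Prop) (wB : W),
    is_L5_frame W R wB ->
    forall g : nat -> W -> Prop,
      (forall x u v, R u v -> g x u -> g x v) ->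
      forall wT : W, (forall w, R wT w -> w = wT) ->
        (forall psi, Phi psi -> forces W R wB g wT psi) ->
        forces W R wB g wT phi.

(* Soundness: in an L5-model the box is two-valued (top on top, bottom elsewhere), so
   [p ≡ q] evaluates to top or bottom, which validates the substitution theorems; excluded
   middle need not hold in the algebra but does hold in the ultrafilter TRUE.
   Kripke frames give L5-models: the upsets of a frame form a Heyting algebra, truth is
   membership of the maximal world wT, and since wB is least, a formula holds at wB iff it
   holds everywhere.
   Completeness: extend Phi to a prime L5-theory T omitting phi.  The canonical frame
   consists of the prime intuitionistic theories containing B = {a | Box a ∈ T}, ordered by
   inclusion; B is its least and T a maximal element, unions bound chains, and the axioms
   (ii)-(vi) make membership of [Box a] in any world equivalent to [a ∈ B]. *)

From Stdlib Require Import Classical FunctionalExtensionality PropExtensionality ProofIrrelevance.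
From Stdlib Require Import Lia Cantor.

Section HeytingAlgebra.
Context {M : Type} {bot top : M} {imp join meet : M -> M -> M}.
Hypothesis HA : is_heyting M bot top imp join meet.

Local Notation "a ⊑ b" := (hle M meet a b) (at level 70).

Lemma meetC a b : meet a b = meet b a.
Proof. apply HA. Qed.

Lemma meetA a b c : meet a (meet b c) = meet (meet a b) c.
Proof. apply HA. Qed.

Lemma bot_le a : bot ⊑ a.
Proof. apply HA. Qed.

Lemma le_top a : a ⊑ top.
Proof. apply HA. Qed.

Lemma imp_adjoint a b c : meet c a ⊑ b <-> c ⊑ imp a b.
Proof. apply HA. Qed.

Lemma meet_idem a : meet a a = a.
Proof.
  destruct HA as (_ & _ & _ & _ & meet_absorb & join_absorb & _).
  rewrite <- (join_absorb a a) at 2. apply meet_absorb.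
Qed.

Lemma le_refl a : a ⊑ a.
Proof. apply meet_idem. Qed.

Lemma le_trans a b c : a ⊑ b -> b ⊑ c -> a ⊑ c.
Proof. unfold hle; intros hab hbc. rewrite <- hab, <- meetA, hbc. reflexivity. Qed.

Lemma le_antisym a b : a ⊑ b -> b ⊑ a -> a = b.
Proof. unfold hle; intros hab hba. rewrite <- hab, meetC. exact hba. Qed.

Lemma meet_le_l a b : meet a b ⊑ a.
Proof. unfold hle. rewrite (meetC a b), <- meetA, meet_idem. reflexivity. Qed.

Lemma meet_le_r a b : meet a b ⊑ b.
Proof. unfold hle. rewrite <- meetA, meet_idem. reflexivity. Qed.

Lemma le_meet a b c : c ⊑ a -> c ⊑ b -> c ⊑ meet a b.
Proof. unfold hle; intros hca hcb. rewrite meetA, hca, hcb. reflexivity. Qed.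

Lemma meet_le_compat a b c d : a ⊑ c -> b ⊑ d -> meet a b ⊑ meet c d.
Proof.
  intros hac hbd. apply le_meet.
  - exact (le_trans _ _ _ (meet_le_l a b) hac).
  - exact (le_trans _ _ _ (meet_le_r a b) hbd).
Qed.

Lemma top_meet a : meet top a = a.
Proof. rewrite meetC. apply le_top. Qed.

Lemma le_join_l a b : a ⊑ join a b.
Proof. apply HA. Qed.

Lemma le_join_r a b : b ⊑ join a b.
Proof. destruct HA as (_ & _ & joinC & _). rewrite joinC. apply le_join_l. Qed.

Lemma le_join_eq a b : a ⊑ b <-> join a b = b.
Proof.
  destruct HA as (_ & _ & joinC & _ & meet_absorb & join_absorb & _).
  unfold hle; split; intro h.
  - rewrite <- h, joinC, meetC. apply join_absorb.
  - rewrite <- h. apply meet_absorb.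
Qed.

Lemma join_le a b c : a ⊑ c -> b ⊑ c -> join a b ⊑ c.
Proof.
  destruct HA as (_ & _ & _ & joinA & _).
  rewrite !le_join_eq. intros hac hbc. rewrite <- joinA, hbc, hac. reflexivity.
Qed.

Lemma imp_intro a b c : meet c a ⊑ b -> c ⊑ imp a b.
Proof. apply imp_adjoint. Qed.

Lemma imp_elim a b c : c ⊑ imp a b -> c ⊑ a -> c ⊑ b.
Proof.
  intros hab ha. apply imp_adjoint in hab.
  refine (le_trans _ _ _ _ hab). apply le_meet; [apply le_refl | exact ha].
Qed.

Lemma imp_top_iff a b : imp a b = top <-> a ⊑ b.
Proof.
  split; intro h.
  - rewrite <- (top_meet a). apply imp_adjoint. rewrite h. apply le_refl.
  - apply le_antisym; [apply le_top |]. apply imp_intro. rewrite top_meet. exact h.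
Qed.

Lemma imp_refl a : imp a a = top.
Proof. apply imp_top_iff, le_refl. Qed.

Lemma imp_bot_l a : imp bot a = top.
Proof. apply imp_top_iff, bot_le. Qed.

Lemma imp_top_bot : imp top bot = bot.
Proof.
  apply le_antisym; [| apply bot_le].
  assert (h : meet (imp top bot) top ⊑ bot) by apply imp_adjoint, le_refl.
  rewrite meetC, top_meet in h. exact h.
Qed.

Lemma meet_bot_l a : meet bot a = bot.
Proof. apply bot_le. Qed.

Lemma meet_bot_r a : meet a bot = bot.
Proof. rewrite meetC. apply bot_le. Qed.

Section Ultrafilter.
Context {F : M -> Prop}.
Hypothesis HF : is_ultrafilter M bot top meet F.

Lemma ultrafilter_top : F top.
Proof. apply HF. Qed.

Lemma ultrafilter_up a b : F a -> a ⊑ b -> F b.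
Proof. apply HF. Qed.

Lemma ultrafilter_mp a b : F (imp a b) -> F a -> F b.
Proof.
  intros hab ha. apply (ultrafilter_up (meet (imp a b) a)); [now apply HF |].
  apply (imp_elim a); [apply meet_le_l | apply meet_le_r].
Qed.

(* If no element of F is disjoint from [a], then F extended by [a] is still
   proper, so [a] is in F by maximality. *)
Lemma ultrafilter_excluded_middle a : F (join a (imp a bot)).
Proof.
  destruct HF as [[[F_top [F_up F_meet]] F_bot] F_max].
  destruct (classic (F a)) as [Fa | nFa]; [exact (F_up _ _ Fa (le_join_l _ _)) |].
  destruct (classic (exists f, F f /\ meet f a ⊑ bot)) as [[f [Ff hf]] | nf].
  { apply (F_up (imp a bot)); [| apply le_join_r].
    apply (F_up f _ Ff), imp_intro, hf. }
  exfalso; apply nFa.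
  set (G x := exists f, F f /\ meet f a ⊑ x).
  apply (F_max G).
  - split; [split; [| split] |].
    + exists top. split; [exact F_top | apply le_top].
    + intros x y [f [Ff hx]] hxy. exists f. split; [exact Ff | exact (le_trans _ _ _ hx hxy)].
    + intros x y [f [Ff hx]] [g [Fg hy]]. exists (meet f g). split; [now apply F_meet |].
      apply le_meet; [refine (le_trans _ _ _ _ hx) | refine (le_trans _ _ _ _ hy)];
        apply meet_le_compat; auto using meet_le_l, meet_le_r, le_refl.
    + intros [f [Ff hf]]. apply nf. now exists f.
  - intros x Fx. exists x. split; [exact Fx | apply meet_le_l].
  - exists top. split; [exact F_top |]. rewrite top_meet. apply le_refl.
Qed.

End Ultrafilter.

Section IntuitionisticSoundness.
Variables (fbox : M -> M) (gamma : nat -> M).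
Local Notation ev := (eval M bot imp join meet fbox gamma).

Lemma ipc_thm_eval_top p : ipc_thm p -> ev p = top.
Proof.
  induction 1 as [a b | a b c | a b | a b | a b | a b | a b | a b c | a | a b _ IHa _ IHab];
    simpl; try apply imp_top_iff.
  - apply imp_intro, meet_le_l.
  - apply imp_intro, imp_intro.
    set (X := ev a); set (Y := ev b); set (Z := ev c).
    assert (hX : meet (meet (imp X (imp Y Z)) (imp X Y)) X ⊑ imp X (imp Y Z))
      by exact (le_trans _ _ _ (meet_le_l _ _) (meet_le_l _ _)).
    assert (hXY : meet (meet (imp X (imp Y Z)) (imp X Y)) X ⊑ imp X Y)
      by exact (le_trans _ _ _ (meet_le_l _ _) (meet_le_r _ _)).
    apply (imp_elim Y); apply (imp_elim X); auto using meet_le_r.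
  - apply meet_le_l.
  - apply meet_le_r.
  - apply imp_intro, le_refl.
  - apply le_join_l.
  - apply le_join_r.
  - apply imp_intro, imp_intro. rewrite meetC. apply imp_adjoint.
    apply join_le; apply imp_adjoint; rewrite meetC.
    + apply (imp_elim (ev a)); [| apply meet_le_r].
      exact (le_trans _ _ _ (meet_le_l _ _) (meet_le_l _ _)).
    + apply (imp_elim (ev b)); [| apply meet_le_r].
      exact (le_trans _ _ _ (meet_le_l _ _) (meet_le_r _ _)).
  - apply bot_le.
  - simpl in IHab. rewrite IHa in IHab. apply imp_top_iff in IHab.
    apply le_antisym; [apply le_top | exact IHab].
Qed.

End IntuitionisticSoundness.

End HeytingAlgebra.

Section AlgebraicSoundness.
Context {M : Type} {TRUE : M -> Prop} {fbot ftop : M}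
  {fimp fjoin fmeet : M -> M -> M} {fbox : M -> M}.
Hypothesis HM : is_L5_model M TRUE fbot ftop fimp fjoin fmeet fbox.

Let HA : is_heyting M fbot ftop fimp fjoin fmeet := proj1 HM.

Lemma box_top : fbox ftop = ftop.
Proof. now apply HM. Qed.

Lemma box_not_top m : m <> ftop -> fbox m = fbot.
Proof. now apply HM. Qed.

Lemma box_equiv_top a b : a = b -> fmeet (fbox (fimp a b)) (fbox (fimp b a)) = ftop.
Proof. intros <-. rewrite (imp_refl HA), box_top. apply (top_meet HA). Qed.

Lemma box_equiv_bot a b : a <> b -> fmeet (fbox (fimp a b)) (fbox (fimp b a)) = fbot.
Proof.
  intro hab. destruct (classic (fimp a b = ftop)) as [e1 | e1].
  - assert (e2 : fimp b a <> ftop).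
    { intro e2. apply hab, (le_antisym HA); apply (imp_top_iff HA); assumption. }
    rewrite (box_not_top _ e2). apply (meet_bot_r HA).
  - rewrite (box_not_top _ e1). apply (meet_bot_l HA).
Qed.

Variable gamma : nat -> M.
Local Notation ev := (eval M fbot fimp fjoin fmeet fbox gamma).

Lemma eval_subst x p chi :
  ev (subst x p chi) =
  eval M fbot fimp fjoin fmeet fbox (fun y => if Nat.eqb x y then ev p else gamma y) chi.
Proof. induction chi; simpl; try congruence. now destruct (Nat.eqb x n). Qed.

Lemma axiom_eval_top p : L5_axiom p -> ev p = ftop.
Proof.
  destruct 1 as [p hp | p | p q r | p q | p | p]; simpl.
  - now apply (ipc_thm_eval_top HA).
  - apply (imp_top_iff HA). apply HM.
  - apply (imp_top_iff HA). apply HM.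
  - apply (imp_top_iff HA). apply HM.
  - destruct (classic (ev p = ftop)) as [e | e].
    + rewrite e, box_top, box_top. apply (imp_refl HA).
    + rewrite (box_not_top _ e). apply (imp_bot_l HA).
  - destruct (classic (ev p = ftop)) as [e | e].
    + rewrite e, box_top, (imp_top_bot HA). apply (imp_bot_l HA).
    + rewrite (box_not_top _ e), (imp_refl HA), box_top. apply (imp_refl HA).
Qed.

(* Two-valuedness of the box makes [p ≡ q] evaluate to [ftop] or [fbot]. *)
Lemma substitution_eval_top x p q chi :
  ev (Imp (Equiv p q) (Equiv (subst x p chi) (subst x q chi))) = ftop.
Proof.
  simpl. destruct (classic (ev p = ev q)) as [e | e].
  - rewrite (box_equiv_top (ev (subst x p chi)) (ev (subst x q chi))).
    + apply (imp_top_iff HA), (le_top HA).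
    + now rewrite !eval_subst, e.
  - rewrite (box_equiv_bot _ _ e). apply (imp_bot_l HA).
Qed.

Lemma L5_deriv_true Phi p :
  (forall psi, Phi psi -> TRUE (ev psi)) -> L5_deriv Phi p -> TRUE (ev p).
Proof.
  pose proof (proj1 (proj2 HM)) as HU.
  intros hPhi. induction 1 as [p hp | p hp | x p q chi | p | p hp | p q _ IHp _ IHpq].
  - now apply hPhi.
  - rewrite (axiom_eval_top p hp). apply (ultrafilter_top HU).
  - rewrite substitution_eval_top. apply (ultrafilter_top HU).
  - apply (ultrafilter_excluded_middle HA HU).
  - simpl. rewrite (axiom_eval_top p hp), box_top. apply (ultrafilter_top HU).
  - exact (ultrafilter_mp HA HU _ _ IHpq IHp).
Qed.

End AlgebraicSoundness.

Lemma L5_deriv_conseq Phi phi : L5_deriv Phi phi -> L5_conseq Phi phi.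
Proof.
  intros D M TRUE fbot ftop fimp fjoin fmeet fbox HM gamma hPhi.
  exact (L5_deriv_true HM gamma Phi phi hPhi D).
Qed.

Section UpsetModel.
Variables (W : Type) (R : W -> W -> Prop) (wB : W).
Hypothesis frame : is_L5_frame W R wB.

Let R_refl : forall w, R w w := proj1 (proj2 frame).
Let R_trans : forall u v w, R u v -> R v w -> R u w :=
  proj1 (proj2 (proj2 (proj2 frame))).
Let wB_least : forall w, R wB w := proj1 (proj2 (proj2 (proj2 (proj2 frame)))).

Definition upward (U : W -> Prop) : Prop := forall u v, R u v -> U u -> U v.

Definition upset : Type := {U : W -> Prop | upward U}.

Lemma upset_ext (U V : upset) : (forall w, proj1_sig U w <-> proj1_sig V w) -> U = V.
Proof.
  destruct U as [U hU], V as [V hV]; simpl; intro h.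
  assert (U = V) as <-.
  { apply functional_extensionality; intro w. now apply propositional_extensionality. }
  f_equal. apply proof_irrelevance.
Qed.

Definition up_bot : upset := exist upward (fun _ => False) (fun _ _ _ h => h).
Definition up_top : upset := exist upward (fun _ => True) (fun _ _ _ h => h).

Definition up_meet (U V : upset) : upset.
Proof.
  refine (exist upward (fun w => proj1_sig U w /\ proj1_sig V w) _).
  intros u v r [hU hV]. split; [exact (proj2_sig U u v r hU) | exact (proj2_sig V u v r hV)].
Defined.

Definition up_join (U V : upset) : upset.
Proof.
  refine (exist upward (fun w => proj1_sig U w \/ proj1_sig V w) _).
  intros u v r [hU | hV]; [left; exact (proj2_sig U u v r hU) |
                          right; exact (proj2_sig V u v r hV)].
Defined.

Definition up_imp (U V : upset) : upset.
Proof.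
  refine (exist upward (fun w => forall w', R w w' -> proj1_sig U w' -> proj1_sig V w') _).
  intros u v r h w' r'. apply h. exact (R_trans _ _ _ r r').
Defined.

Definition up_box (U : upset) : upset :=
  exist upward (fun _ => forall v, proj1_sig U v) (fun _ _ _ h => h).

Lemma upset_le (U V : upset) :
  hle upset up_meet U V <-> (forall w, proj1_sig U w -> proj1_sig V w).
Proof.
  unfold hle; split.
  - intros e w h. rewrite <- e in h. apply h.
  - intro h. apply upset_ext. simpl. intro w. split; [tauto | auto].
Qed.

Lemma upset_heyting : is_heyting upset up_bot up_top up_imp up_join up_meet.
Proof.
  repeat split; try (intros; apply upset_ext; simpl; tauto).
  all: rewrite !upset_le; simpl.
  - intros h w hc w' r ha. apply h. split; [exact (proj2_sig c w w' r hc) | exact ha].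
  - intros h w [hc ha]. exact (h w hc w (R_refl w) ha).
Qed.

Variable wT : W.
Hypothesis wT_max : forall w, R wT w -> w = wT.

Let TRUE (U : upset) : Prop := proj1_sig U wT.

(* Maximality of [wT] makes [up_imp U up_bot] true at [wT] whenever [U] is not. *)
Lemma upset_ultrafilter : is_ultrafilter upset up_bot up_top up_meet TRUE.
Proof.
  split; [split; [split; [| split] |] |]; unfold TRUE.
  - exact I.
  - intros U V hU hUV. exact (proj1 (upset_le U V) hUV wT hU).
  - intros U V hU hV. now split.
  - simpl; tauto.
  - intros G [[_ [G_up G_meet]] G_bot] hsub U GU. apply NNPP; intro nU.
    apply G_bot, (G_up (up_meet U (up_imp U up_bot))).
    + apply G_meet; [exact GU |]. apply hsub. intros w r hw. now rewrite (wT_max w r) in hw.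
    + apply upset_le. intros w [h1 h2]. exact (h2 w (R_refl w) h1).
Qed.

Lemma upset_model : is_L5_model upset TRUE up_bot up_top up_imp up_join up_meet up_box.
Proof.
  split; [exact upset_heyting |]. split; [exact upset_ultrafilter |].
  split; [| split; [| split; [| split]]].
  - intro U. apply upset_le. simpl. auto.
  - intros U V X. apply upset_le. simpl. intros _ hUV _ _ hVX _ w _ hU.
    apply (hVX w w (R_refl w)), (hUV w w (R_refl w) hU).
  - intros U V. apply upset_le. simpl. intros _ h.
    destruct (h wB) as [hU | hV]; [left | right]; intro v;
      [exact (proj2_sig U _ _ (wB_least v) hU) | exact (proj2_sig V _ _ (wB_least v) hV)].
  - intro U. unfold TRUE. simpl. split.
    + intro h. apply upset_ext. simpl. split; auto.
    + intros -> v. exact I.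
  - intro U. split.
    + intros ->. apply upset_ext. simpl. tauto.
    + intro ne. apply upset_ext. simpl. split; [| tauto]. intro h. apply ne.
      apply upset_ext. simpl. split; auto.
Qed.

Variables (g : nat -> W -> Prop) (g_up : forall x u v, R u v -> g x u -> g x v).

Definition upset_valuation (x : nat) : upset := exist upward (g x) (g_up x).

Lemma forces_up p u v : R u v -> forces W R wB g u p -> forces W R wB g v p.
Proof.
  revert u v. induction p; simpl; intros u v r h; eauto.
  - destruct h; split; eauto.
  - destruct h; [left | right]; eauto.
Qed.

Lemma eval_upset p w :
  proj1_sig (eval upset up_bot up_imp up_join up_meet up_box upset_valuation p) w <->
  forces W R wB g w p.
Proof.
  revert w. induction p as [x | | a IHa b IHb | a IHa b IHb | a IHa b IHb | a IHa]; intro w; simpl.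
  - tauto.
  - tauto.
  - now rewrite IHa, IHb.
  - now rewrite IHa, IHb.
  - split; intros h w' r; specialize (h w' r); now rewrite IHa, IHb in *.
  - split; intro h; [now apply IHa |].
    intro v. apply IHa. exact (forces_up a wB v (wB_least v) h).
Qed.

End UpsetModel.

Lemma L5_conseq_Kr Phi phi : L5_conseq Phi phi -> Kr_conseq Phi phi.
Proof.
  intros hA W R wB frame g g_up wT wT_max hPhi.
  apply (eval_upset W R wB frame g g_up).
  apply (hA _ _ _ _ _ _ _ _ (upset_model W R wB frame wT wT_max)).
  intros psi hpsi. apply (eval_upset W R wB frame g g_up). auto.
Qed.

Definition incl (G H : formula -> Prop) : Prop := forall x, G x -> H x.

Definition ext (G : formula -> Prop) (a : formula) : formula -> Prop := fun x => G x \/ x = a.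

Definition finitary (Cn : (formula -> Prop) -> formula -> Prop) : Prop :=
  forall (I : Type) (F : I -> formula -> Prop), inhabited I ->
  (forall i j, exists k, incl (F i) (F k) /\ incl (F j) (F k)) ->
  forall p, Cn (fun x => exists i, F i x) p -> exists i, Cn (F i) p.

Definition prime_theory (Cn : (formula -> Prop) -> formula -> Prop) (D : formula -> Prop) : Prop :=
  (forall p, Cn D p -> D p) /\ (forall a b, D (Or a b) -> D a \/ D b) /\ ~ D Bot.

Inductive ipc_deriv (G : formula -> Prop) : formula -> Prop :=
| ipc_hyp : forall p, G p -> ipc_deriv G p
| ipc_ax : forall p, ipc_thm p -> ipc_deriv G p
| ipc_mp : forall p q, ipc_deriv G p -> ipc_deriv G (Imp p q) -> ipc_deriv G q.

Lemma ipc_imp_refl a : ipc_thm (Imp a a).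
Proof.
  apply (ipc_MP (Imp a (Imp a a))); [apply ipc_K |].
  apply (ipc_MP (Imp a (Imp (Imp a a) a))); [apply ipc_K | apply ipc_S].
Qed.

Lemma ipc_deriv_mono G H p : incl G H -> ipc_deriv G p -> ipc_deriv H p.
Proof.
  intros hGH. induction 1 as [p hp | p hp | p q _ IHp _ IHpq].
  - exact (ipc_hyp _ p (hGH p hp)).
  - now apply ipc_ax.
  - exact (ipc_mp _ p q IHp IHpq).
Qed.

Lemma ipc_deduction G a b : ipc_deriv (ext G a) b -> ipc_deriv G (Imp a b).
Proof.
  induction 1 as [p [hp | ->] | p hp | p q _ IHp _ IHpq].
  - apply (ipc_mp _ p); [now apply ipc_hyp | apply ipc_ax, ipc_K].
  - apply ipc_ax, ipc_imp_refl.
  - apply (ipc_mp _ p); apply ipc_ax; [exact hp | apply ipc_K].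
  - apply (ipc_mp _ _ _ IHp). apply (ipc_mp _ _ _ IHpq). apply ipc_ax, ipc_S.
Qed.

Lemma ipc_deriv_empty p : ipc_deriv (fun _ => False) p -> ipc_thm p.
Proof.
  induction 1 as [p [] | p hp | p q _ IHp _ IHpq]; [exact hp | exact (ipc_MP p q IHp IHpq)].
Qed.

Lemma ipc_top_imp a : ipc_thm (Imp (Imp Top a) a).
Proof.
  apply ipc_deriv_empty, ipc_deduction.
  apply (ipc_mp _ Top); [apply ipc_ax, ipc_imp_refl | now apply ipc_hyp; right].
Qed.

Lemma ipc_deriv_finitary : finitary ipc_deriv.
Proof.
  intros I F [i0] dir. induction 1 as [p [i hp] | p hp | p q _ [i hi] _ [j hj]].
  - exists i. now apply ipc_hyp.
  - exists i0. now apply ipc_ax.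
  - destruct (dir i j) as [k [hik hjk]]. exists k.
    apply (ipc_mp _ p); [exact (ipc_deriv_mono _ _ _ hik hi) | exact (ipc_deriv_mono _ _ _ hjk hj)].
Qed.

Lemma L5_ipc G p : ipc_thm p -> L5_deriv G p.
Proof. intro h. now apply d_ax, ax_i. Qed.

Lemma ipc_deriv_L5 G p : ipc_deriv G p -> L5_deriv G p.
Proof.
  induction 1 as [p hp | p hp | p q _ IHp _ IHpq];
    [now apply d_hyp | now apply L5_ipc | exact (d_mp _ p q IHp IHpq)].
Qed.

Lemma L5_deriv_mono G H p : incl G H -> L5_deriv G p -> L5_deriv H p.
Proof.
  intros hGH. induction 1 as [p hp | | | | | p q _ IHp _ IHpq]; try (constructor; assumption).
  - exact (d_hyp _ p (hGH p hp)).
  - exact (d_mp _ p q IHp IHpq).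
Qed.

Lemma L5_deduction G a b : L5_deriv (ext G a) b -> L5_deriv G (Imp a b).
Proof.
  induction 1 as [p [hp | ->] | p hp | x p q chi | p | p hp | p q _ IHp _ IHpq];
    try (eapply d_mp; [| apply L5_ipc, (ipc_K _ a)]; constructor; assumption).
  - apply L5_ipc, ipc_imp_refl.
  - apply (d_mp _ _ _ IHp). apply (d_mp _ _ _ IHpq). apply L5_ipc, ipc_S.
Qed.

Lemma L5_deriv_finitary : finitary L5_deriv.
Proof.
  intros I F [i0] dir. induction 1 as [p [i hp] | | | | | p q _ [i hi] _ [j hj]];
    try (exists i0; constructor; assumption).
  - exists i. now apply d_hyp.
  - destruct (dir i j) as [k [hik hjk]]. exists k.
    apply (d_mp _ p); [exact (L5_deriv_mono _ _ _ hik hi) | exact (L5_deriv_mono _ _ _ hjk hj)].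
Qed.

Fixpoint encode (p : formula) : nat :=
  match p with
  | Var x => to_nat (0, x)
  | Bot => to_nat (1, 0)
  | And a b => to_nat (2, to_nat (encode a, encode b))
  | Or a b => to_nat (3, to_nat (encode a, encode b))
  | Imp a b => to_nat (4, to_nat (encode a, encode b))
  | Box a => to_nat (5, encode a)
  end.

Fixpoint decode (fuel n : nat) : formula :=
  match fuel with
  | 0 => Bot
  | S fuel =>
    match of_nat n with
    | (0, x) => Var x
    | (2, m) => let (i, j) := of_nat m in And (decode fuel i) (decode fuel j)
    | (3, m) => let (i, j) := of_nat m in Or (decode fuel i) (decode fuel j)
    | (4, m) => let (i, j) := of_nat m in Imp (decode fuel i) (decode fuel j)
    | (5, m) => Box (decode fuel m)
    | _ => Bot
    end
  end.

Fixpoint depth (p : formula) : nat :=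
  match p with
  | Var _ | Bot => 0
  | And a b | Or a b | Imp a b => S (Nat.max (depth a) (depth b))
  | Box a => S (depth a)
  end.

Lemma decode_encode p fuel : depth p < fuel -> decode fuel (encode p) = p.
Proof.
  revert fuel.
  induction p; intros [| fuel] h; cbn -[to_nat of_nat] in *; try lia; rewrite ?cancel_of_to;
    try reflexivity.
  - rewrite IHp1, IHp2 by lia; reflexivity.
  - rewrite IHp1, IHp2 by lia; reflexivity.
  - rewrite IHp1, IHp2 by lia; reflexivity.
  - rewrite IHp by lia; reflexivity.
Qed.

Definition enum_formula (k : nat) : formula := let (fuel, n) := of_nat k in decode fuel n.

Lemma enum_formula_surj p : exists k, enum_formula k = p.
Proof.
  exists (to_nat (S (depth p), encode p)). unfold enum_formula.
  rewrite cancel_of_to. apply decode_encode. lia.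
Qed.

Section Lindenbaum.
Variable Cn : (formula -> Prop) -> formula -> Prop.
Hypotheses (Cn_mono : forall G H p, incl G H -> Cn G p -> Cn H p)
  (Cn_finitary : finitary Cn)
  (Cn_hyp : forall G p, G p -> Cn G p)
  (Cn_ipc : forall G p, ipc_thm p -> Cn G p)
  (Cn_mp : forall G p q, Cn G p -> Cn G (Imp p q) -> Cn G q)
  (Cn_deduction : forall G a b, Cn (ext G a) b -> Cn G (Imp a b)).

Variables (G0 : formula -> Prop) (goal : formula).

Fixpoint lindenbaum_chain (n : nat) : formula -> Prop :=
  match n with
  | 0 => G0
  | S n => fun x => lindenbaum_chain n x \/
             (x = enum_formula n /\ ~ Cn (ext (lindenbaum_chain n) (enum_formula n)) goal)
  end.

Lemma lindenbaum_chain_mono n m : n <= m -> incl (lindenbaum_chain n) (lindenbaum_chain m).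
Proof. induction 1; [now intros x | intros x h; left; auto]. Qed.

Hypothesis G0_goal : ~ Cn G0 goal.

Lemma lindenbaum_chain_goal n : ~ Cn (lindenbaum_chain n) goal.
Proof.
  induction n as [| n IHn]; simpl; [exact G0_goal |]. intro c.
  destruct (classic (Cn (ext (lindenbaum_chain n) (enum_formula n)) goal)) as [c1 | c1].
  - apply IHn. refine (Cn_mono _ _ _ _ c). now intros x [hx | [_ hx]].
  - apply c1. refine (Cn_mono _ _ _ _ c). intros x [hx | [hx _]]; [left | right]; auto.
Qed.

Let D (x : formula) : Prop := exists n, lindenbaum_chain n x.

Lemma lindenbaum_goal : ~ Cn D goal.
Proof.
  intro c. apply Cn_finitary in c as [n c].
  - exact (lindenbaum_chain_goal n c).
  - exact (inhabits 0).
  - intros i j. exists (Nat.max i j). split; apply lindenbaum_chain_mono; lia.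
Qed.

Lemma lindenbaum_maximal x : ~ Cn (ext D x) goal -> D x.
Proof.
  intros nc. destruct (enum_formula_surj x) as [k <-]. exists (S k). simpl. right.
  split; [reflexivity |]. intro c. apply nc. refine (Cn_mono _ _ _ _ c).
  intros y [hy | ->]; [left; now exists k | now right].
Qed.

Lemma lindenbaum_refutes x : ~ D x -> Cn D (Imp x goal).
Proof. intro nx. apply Cn_deduction, NNPP. intro c. exact (nx (lindenbaum_maximal x c)). Qed.

Lemma lindenbaum_prime : prime_theory Cn D.
Proof.
  split; [| split].
  - intros p hp. apply NNPP. intro np.
    exact (lindenbaum_goal (Cn_mp _ _ _ hp (lindenbaum_refutes p np))).
  - intros a b hab. apply NNPP. intro nab. apply lindenbaum_goal.
    pose proof (lindenbaum_refutes a (fun h => nab (or_introl h))) as ha.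
    pose proof (lindenbaum_refutes b (fun h => nab (or_intror h))) as hb.
    apply (Cn_mp _ (Or a b)); [now apply Cn_hyp |].
    apply (Cn_mp _ _ _ hb), (Cn_mp _ _ _ ha), Cn_ipc, ipc_O3.
  - intro hbot. apply lindenbaum_goal.
    apply (Cn_mp _ Bot); [now apply Cn_hyp | apply Cn_ipc, ipc_EFQ].
Qed.

Lemma lindenbaum : exists D, incl G0 D /\ prime_theory Cn D /\ ~ D goal.
Proof.
  exists D. split; [| split].
  - intros x hx. now exists 0.
  - exact lindenbaum_prime.
  - intro hgoal. exact (lindenbaum_goal (Cn_hyp _ _ hgoal)).
Qed.

End Lindenbaum.

Lemma L5_box_top G a :
  L5_deriv G (Imp (Box a) (Box (Imp Top a))) /\ L5_deriv G (Imp (Box (Imp Top a)) (Box a)).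
Proof.
  assert (E : L5_deriv G (Equiv a (Imp Top a))).
  { apply (d_mp _ (Box (Imp (Imp Top a) a))); [apply d_nec, ax_i, ipc_top_imp |].
    apply (d_mp _ (Box (Imp a (Imp Top a)))); [apply d_nec, ax_i, ipc_K | apply L5_ipc, ipc_A3]. }
  (* the substitution theorem with [chi := Box (Var 0)] *)
  pose proof (d_mp _ _ _ E (d_substthm G 0 a (Imp Top a) (Box (Var 0)))) as S; simpl in S.
  split; eapply d_mp; [| apply d_ax, ax_ii | | apply d_ax, ax_ii].
  - exact (d_mp _ _ _ S (L5_ipc _ _ (ipc_A1 _ _))).
  - exact (d_mp _ _ _ S (L5_ipc _ _ (ipc_A2 _ _))).
Qed.

(* Axiom (iii) only composes boxed implications, so [Box a] is first rewritten as
   [Box (Top -> a)]. *)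
Lemma L5_box_mp G a b : L5_deriv G (Box a) -> L5_deriv G (Box (Imp a b)) -> L5_deriv G (Box b).
Proof.
  intros ha hab.
  pose proof (d_mp _ _ _ ha (proj1 (L5_box_top G a))) as hta.
  pose proof (d_mp _ _ _ hab (d_mp _ _ _ hta (d_ax _ _ (ax_iii Top a b)))) as htb.
  exact (d_mp _ _ _ htb (proj2 (L5_box_top G b))).
Qed.

Section PrimeTheory.
Variable w : formula -> Prop.
Hypothesis Hw : prime_theory ipc_deriv w.

Lemma theory_mp a b : w a -> w (Imp a b) -> w b.
Proof. intros ha hab. apply Hw. apply (ipc_mp _ a); now apply ipc_hyp. Qed.

Lemma theory_ipc a : ipc_thm a -> w a.
Proof. intro h. apply Hw. now apply ipc_ax. Qed.

Lemma theory_and a b : w (And a b) <-> w a /\ w b.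
Proof.
  split.
  - intro h. split; apply (theory_mp _ _ h), theory_ipc; constructor.
  - intros [ha hb]. apply (theory_mp _ _ hb), (theory_mp _ _ ha), theory_ipc, ipc_A3.
Qed.

Lemma theory_or a b : w (Or a b) <-> w a \/ w b.
Proof.
  split; [apply Hw |].
  intros [h | h]; apply (theory_mp _ _ h), theory_ipc; constructor.
Qed.

End PrimeTheory.

Lemma prime_L5_ipc T : prime_theory L5_deriv T -> prime_theory ipc_deriv T.
Proof.
  intros [closed prime]. split; [| exact prime]. intros p d. apply closed, ipc_deriv_L5, d.
Qed.

Definition boxed (T : formula -> Prop) : formula -> Prop := fun a => T (Box a).

Section CanonicalModel.
Variable T : formula -> Prop.
Hypothesis T_prime : prime_theory L5_deriv T.

Let T_ipc : prime_theory ipc_deriv T := prime_L5_ipc T T_prime.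

Lemma T_axiom a : L5_axiom a -> T a.
Proof. intro h. now apply T_prime, d_ax. Qed.

Lemma T_complete p : T p \/ T (Neg p).
Proof. apply T_prime, T_prime, d_lem. Qed.

Lemma boxed_incl : incl (boxed T) T.
Proof. intros a h. exact (theory_mp T T_ipc _ _ h (T_axiom _ (ax_ii a))). Qed.

Lemma boxed_prime : prime_theory ipc_deriv (boxed T).
Proof.
  split; [| split].
  - intros p d. apply T_prime.
    induction d as [p hp | p hp | p q _ IHp _ IHpq].
    + now apply d_hyp.
    + now apply d_nec, ax_i.
    + exact (L5_box_mp _ _ _ IHp IHpq).
  - intros a b h. apply T_prime. exact (theory_mp T T_ipc _ _ h (T_axiom _ (ax_iv a b))).
  - intro h. now apply T_prime, boxed_incl.
Qed.

Lemma boxed_box a : boxed T a -> boxed T (Box a).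
Proof. intro h. exact (theory_mp T T_ipc _ _ h (T_axiom _ (ax_v a))). Qed.

Lemma boxed_neg_box a : ~ boxed T a -> boxed T (Neg (Box a)).
Proof.
  intro h. destruct (T_complete (Box a)) as [hbox | hneg]; [contradiction |].
  exact (theory_mp T T_ipc _ _ hneg (T_axiom _ (ax_vi a))).
Qed.

Definition world (w : formula -> Prop) : Prop := incl (boxed T) w /\ prime_theory ipc_deriv w.

Definition cworld : Type := {w | world w}.
Definition cR (u v : cworld) : Prop := incl (proj1_sig u) (proj1_sig v).
Definition cval (x : nat) (w : cworld) : Prop := proj1_sig w (Var x).
Definition cB : cworld := exist world (boxed T) (conj (fun _ h => h) boxed_prime).
Definition cT : cworld := exist world T (conj boxed_incl T_ipc).

Lemma cworld_prime (w : cworld) : prime_theory ipc_deriv (proj1_sig w).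
Proof. exact (proj2 (proj2_sig w)). Qed.

Lemma cworld_boxed (w : cworld) : incl (boxed T) (proj1_sig w).
Proof. exact (proj1 (proj2_sig w)). Qed.

Lemma cworld_ext (u v : cworld) : cR u v -> cR v u -> u = v.
Proof.
  destruct u as [U hU], v as [V hV]; unfold cR; simpl; intros huv hvu.
  assert (U = V) as <-.
  { apply functional_extensionality; intro x. apply propositional_extensionality. split; auto. }
  f_equal. apply proof_irrelevance.
Qed.

Lemma world_extension (w : cworld) a b :
  ~ proj1_sig w (Imp a b) -> exists w' : cworld, cR w w' /\ proj1_sig w' a /\ ~ proj1_sig w' b.
Proof.
  destruct w as [w [hB hw]]; simpl. intro nab.
  destruct (lindenbaum ipc_deriv ipc_deriv_mono ipc_deriv_finitary ipc_hyp ipc_ax ipc_mp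
              ipc_deduction (ext w a) b) as [w' [hincl [hw' nb]]].
  { intro d. apply nab, hw, ipc_deduction, d. }
  assert (hworld : world w').
  { split; [| exact hw']. intros x hx. apply hincl. left. now apply hB. }
  exists (exist _ w' hworld). simpl. split; [| split; [| exact nb]].
  - intros x hx. apply hincl. now left.
  - apply hincl. now right.
Qed.

Lemma world_box (w : cworld) a : proj1_sig w (Box a) <-> boxed T a.
Proof.
  destruct w as [w [hB hw]]; simpl. split.
  - intro h. apply NNPP. intro na. apply hw.
    exact (theory_mp w hw _ _ h (hB _ (boxed_neg_box a na))).
  - intro h. exact (hB _ (boxed_box a h)).
Qed.

Lemma truth_lemma p (w : cworld) : forces cworld cR cB cval w p <-> proj1_sig w p.
Proof.
  revert w. induction p as [x | | a IHa b IHb | a IHa b IHb | a IHa b IHb | a IHa]; intro w; simpl.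
  - reflexivity.
  - split; [tauto | apply (cworld_prime w)].
  - rewrite IHa, IHb. symmetry. apply theory_and, cworld_prime.
  - rewrite IHa, IHb. symmetry. apply theory_or, cworld_prime.
  - split.
    + intro h. apply NNPP. intro nab.
      destruct (world_extension w a b nab) as [w' [r [ha nb]]].
      apply nb, IHb, h; [exact r | now apply IHa].
    + intros h w' r ha. apply IHb. apply IHa in ha.
      exact (theory_mp _ (cworld_prime w') _ _ ha (r _ h)).
  - rewrite IHa. simpl. symmetry. apply world_box.
Qed.

(* A chain is bounded by its union, which is again a world by finitarity of [ipc_deriv]. *)
Lemma chain_upper_bound (C : cworld -> Prop) :
  (forall u v, C u -> C v -> cR u v \/ cR v u) -> exists u, forall v, C v -> cR v u.
Proof.
  intros chain. destruct (classic (exists c, C c)) as [[c0 hc0] | empty].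
  2: { exists cB. intros v hv. exfalso. apply empty. now exists v. }
  set (U x := exists c, C c /\ proj1_sig c x).
  assert (hU : world U).
  { split; [| split; [| split]].
    - intros x hx. exists c0. split; [exact hc0 | now apply cworld_boxed].
    - intros p d.
      destruct (ipc_deriv_finitary {c | C c} (fun i => proj1_sig (proj1_sig i))
                  (inhabits (exist _ c0 hc0))) with (p := p) as [[c hc] dc].
      + intros [u hu] [v hv]. simpl.
        destruct (chain u v hu hv) as [r | r];
          [exists (exist _ v hv) | exists (exist _ u hu)]; split; simpl; auto; now intros x.
      + refine (ipc_deriv_mono _ _ _ _ d). intros x [c [hc hx]]. now exists (exist _ c hc).
      + exists c. split; [exact hc | now apply (cworld_prime c)].
    - intros a b [c [hc h]]. apply (cworld_prime c) in h as [h | h]; [left | right]; now exists c.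
    - intros [c [_ h]]. now apply (cworld_prime c) in h. }
  exists (exist _ U hU). intros c hc x h. now exists c.
Qed.

Lemma canonical_frame : is_L5_frame cworld cR cB.
Proof.
  split; [now exists cB | split; [| split; [| split; [| split]]]].
  - now intros w x.
  - exact cworld_ext.
  - intros u v w huv hvw x h. auto.
  - intros w x h. now apply cworld_boxed.
  - exact chain_upper_bound.
Qed.

(* A world above [T] cannot contain more, since [T] decides every formula. *)
Lemma cT_maximal w : cR cT w -> w = cT.
Proof.
  intro r. apply cworld_ext; [| exact r]. intros x h. simpl.
  destruct (T_complete x) as [hx | hnx]; [exact hx |]. exfalso.
  apply (cworld_prime w). exact (theory_mp _ (cworld_prime w) _ _ h (r _ hnx)).
Qed.

End CanonicalModel.

Lemma Kr_conseq_deriv Phi phi : Kr_conseq Phi phi -> L5_deriv Phi phi.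
Proof.
  intro hK. apply NNPP. intro nd.
  destruct (lindenbaum L5_deriv L5_deriv_mono L5_deriv_finitary d_hyp L5_ipc d_mp L5_deduction
              Phi phi nd) as [T [hincl [hT nT]]].
  apply nT. apply (truth_lemma T hT phi (cT T hT)).
  apply hK.
  - exact (canonical_frame T hT).
  - intros x u v r h. exact (r _ h).
  - exact (cT_maximal T hT).
  - intros psi hpsi. apply (truth_lemma T hT). exact (hincl _ hpsi).
Qed.

Theorem corollary5p5 (Phi : formula -> Prop) (phi : formula) :
  (L5_deriv Phi phi <-> L5_conseq Phi phi) /\
  (L5_conseq Phi phi <-> Kr_conseq Phi phi).
Proof.
  split; split; intro h.
  - exact (L5_deriv_conseq Phi phi h).
  - exact (Kr_conseq_deriv Phi phi (L5_conseq_Kr Phi phi h)).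
  - exact (L5_conseq_Kr Phi phi h).
  - exact (L5_deriv_conseq Phi phi (Kr_conseq_deriv Phi phi h)).
Qed.
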